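(* Let $n\ge 2$, $1\le d\le n-1$, and consider a network of the type below on nodes $\{1,\dots,n\}$ in which node $i$ has degree $d$. Then $$\Delta_i\le \frac{\lambda_s}{\lambda}\,\frac{n}{d+1}\left(1+\sum_{d_2=0}^{d-1}\prod_{d_1=0}^{d_2}\frac{d-d_1}{d+1}\right),$$ with equality when the $d$ neighbours of $i$ have degree $1$ (i.e., the only links incident to them are their links to $i$).
   Context: Version-age model. A gossip network on a finite node set $\mathcal N$ is specified by source rates $\lambda_{0j}>0$ and gossip rates $\lambda_{ij}\ge 0$ ($i\neq j$; rate at which $i$ sends to $j$); $\lambda_s>0$ is the source's update rate. For nonempty $S\subseteq\mathcal N$ let $N(S)=\{i\in\mathcal N\setminus S:\ \sum_{j\in S}\lambda_{ij}>0\}$ and define $$\Delta_S=\frac{\lambda_s+\sum_{i\in N(S)}\big(\sum_{j\in S}\lambda_{ij}\big)\Delta_{S\cup\{i\}}}{\sum_{j\in S}\lambda_{0j}+\sum_{i\in N(S)}\sum_{j\in S}\lambda_{ij}}$$ (well defined by downward induction on $|S|$); $\Delta_i=\Delta_{\{i\}}$. Networks with uniform link rate: node set $\{1,\dots,n\}$, $\lambda_{0j}=\lambda/n$ for all $j$, and a set of links (unordered pairs of distinct nodes); for each link $\{a,b\}$, $\lambda_{ab}=\lambda_{ba}=\lambda/n$, and $\lambda_{ab}=0$ if $\{a,b\}$ is not a link. The degree of a node is the number of links incident to it. *)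

From mathcomp Require Import all_boot all_order all_algebra.
Set Implicit Arguments. Unset Strict Implicit. Unset Printing Implicit Defensive.
Import Order.TTheory GRing.Theory Num.Theory.
Local Open Scope ring_scope.

Section VersionAge.
Variables (R : realFieldType) (n : nat).

(* A general gossip network on nodes 'I_n :
   lam0 j = lambda_{0j} (source -> j), lam i j = lambda_{ij} (i -> j),
   lams = lambda_s. *)

Definition rate_into (lam : 'I_n -> 'I_n -> R) (S : {set 'I_n}) (i : 'I_n) : R :=
  \sum_(j in S) lam i j.

Definition nbrs (lam : 'I_n -> 'I_n -> R) (S : {set 'I_n}) : {set 'I_n} :=
  [set i | (i \notin S) && (0 < rate_into lam S i)].

Fixpoint Delta_fuel (lams : R) (lam0 : 'I_n -> R) (lam : 'I_n -> 'I_n -> R)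
    (m : nat) (S : {set 'I_n}) : R :=
  match m with
  | 0%N => 0
  | m'.+1 =>
      (lams + \sum_(i in nbrs lam S) rate_into lam S i
                    * Delta_fuel lams lam0 lam m' (i |: S))
      / (\sum_(j in S) lam0 j + \sum_(i in nbrs lam S) rate_into lam S i)
  end.

(* Delta_S, for nonempty S (fuel n - |S| + 1 suffices: downward induction
   on |S|). *)
Definition DeltaS lams lam0 lam (S : {set 'I_n}) : R :=
  Delta_fuel lams lam0 lam (n - #|S|).+1 S.

Definition Delta_node lams lam0 lam (i : 'I_n) : R := DeltaS lams lam0 lam [set i].

Definition unif_lam0 (lam : R) : 'I_n -> R := fun _ => lam / n%:R.
Definition unif_lam (lam : R) (e : rel 'I_n) : 'I_n -> 'I_n -> R :=
  fun a b => if e a b then lam / n%:R else 0.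

Definition degree (e : rel 'I_n) (i : 'I_n) : nat := #|[set j | e i j]|.

End VersionAge.

From mathcomp Require Import all_boot all_order all_algebra.
From mathcomp Require Import ring lra.
Import Order.TTheory GRing.Theory Num.Theory.
Local Open Scope ring_scope.
Set Implicit Arguments. Unset Strict Implicit.

(* Fix the node i and follow the recursion defining Delta_S only through sets
   S containing i.  Such a set is described, as far as the comparison is
   concerned, by two numbers: its size m and the number u of neighbours of i
   still outside S.  The function [star_age m u] is the exact age of S in the
   extremal network where the neighbours of i are leaves: every node receives
   source rate a, and S can only grow by absorbing one of the u remaining
   leaves, each attached to S by a single link of rate a.

   Then, in an
   arbitrary uniform network, Delta_S <= star_age |S| u by induction on the
   recursion ([Delta_fuel_le]): neighbours of i are linked to S at rate at
   least a and lead to a set with one pending neighbour fewer, other nodes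
   only enlarge S.  When the neighbours of i are leaves, every set reached
   from {i} lies in the star of i, the recursion coincides with that of
   [star_age], and equality holds ([Delta_fuel_star]).  The theorem is the
   case S = {i}, m = 1, u = d. *)

(* A node sending at rate r >= a into S and leading to a set of age
   x <= g <= F contributes r x <= r F + a (g - F), the last term being
   nonpositive: this bounds the contribution of a neighbour of the hub. *)
Lemma weighted_le (R : realDomainType) (r x g F a : R) :
  0 <= a <= r -> x <= g -> g <= F -> r * x <= r * F + a * (g - F).
Proof. move=> /andP[a_ge0 a_le_r] x_le_g g_le_F; nra. Qed.

Section StarAge.
Variables (R : realFieldType) (lams a : R).
Hypotheses (lams_ge0 : 0 <= lams) (a_gt0 : 0 < a).
Let a_ge0 : 0 <= a := ltW a_gt0.

(* [star_age m u]: age of a set of m nodes containing the hub when u leaves of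
   the hub remain outside it; every node has source rate a, every link rate a. *)
Fixpoint star_age (m u : nat) : R :=
  if u is u'.+1 then (lams + u%:R * a * star_age m.+1 u') / ((m + u)%:R * a)
  else lams / (m%:R * a).

(* The defining recursion, stated uniformly in u (the term in u vanishes for
   u = 0). *)
Lemma star_ageE m u :
  star_age m u = (lams + u%:R * a * star_age m.+1 u.-1) / ((m + u)%:R * a).
Proof. by case: u => [|u] //=; rewrite mul0r mul0r addr0 addn0. Qed.

Lemma rate_gt0 m : (0 < m)%N -> 0 < m%:R * a.
Proof. by move=> m_gt0; rewrite mulr_gt0 ?ltr0n. Qed.

Lemma star_age_ge0 m u : 0 <= star_age m u.
Proof.
elim: u m => [|u IH] m; rewrite star_ageE divr_ge0 ?mulr_ge0 ?ler0n //.
all: by rewrite addr_ge0 // ?mul0r // !mulr_ge0 ?ler0n ?IH.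
Qed.

Lemma star_age_balance m u : (0 < m)%N ->
  star_age m u * ((m + u)%:R * a) = lams + u%:R * a * star_age m.+1 u.-1.
Proof.
by move=> m_gt0; rewrite star_ageE divfK // gt_eqF // rate_gt0 // addn_gt0 m_gt0.
Qed.

Lemma star_age_base_balance m : (0 < m)%N -> star_age m 0 * (m%:R * a) = lams.
Proof. by move=> m_gt0; rewrite /= divfK // gt_eqF // rate_gt0. Qed.

Lemma star_age_balanceS m u : (0 < m)%N ->
  star_age m u * ((m.+1 + u)%:R * a)
  = lams + u%:R * a * star_age m.+1 u.-1 + star_age m u * a.
Proof.
by move=> m_gt0; rewrite addSn -addn1 natrD mulrDl mulrDr star_age_balance ?mul1r.
Qed.

(* One inductive step of [star_age_grow], stated for products so that it also
   covers [u = 0]. *)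
Lemma star_age_grow_step m u : (0 < m)%N ->
  u%:R * a * star_age m.+2 u.-1 <= u%:R * a * star_age m.+1 u.-1 ->
  star_age m.+1 u <= star_age m u.
Proof.
move=> m_gt0 le_next.
rewrite -(ler_pM2r (rate_gt0 (ltn0Sn (m + u)))) star_age_balance //.
rewrite star_age_balanceS // -addrA lerD2l ler_wpDr //.
by rewrite mulr_ge0 ?star_age_ge0.
Qed.

Lemma star_age_grow m u : (0 < m)%N -> star_age m.+1 u <= star_age m u.
Proof.
elim: u m => [|u IH] m m_gt0; apply: star_age_grow_step => //.
  by rewrite !mul0r.
by rewrite ler_wpM2l ?mulr_ge0 ?ler0n ?IH.
Qed.

Lemma star_age_le_base m u : (0 < m)%N -> star_age m u <= star_age m 0.
Proof.
elim: u m => [|u IH] m m_gt0 //.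
have le_next : star_age m.+1 u <= star_age m 0.
  exact: le_trans (IH _ (ltn0Sn m)) (star_age_grow 0 m_gt0).
have m_u_gt0 : (0 < m + u.+1)%N by rewrite addn_gt0 m_gt0.
rewrite -(ler_pM2r (rate_gt0 m_u_gt0)) star_age_balance //.
rewrite natrD mulrDl mulrDr star_age_base_balance //.
by rewrite lerD2l mulrC ler_wpM2r ?mulr_ge0.
Qed.

Lemma star_age_absorb m u : (0 < m)%N -> star_age m.+1 u <= star_age m u.+1.
Proof.
move=> m_gt0; have m_u_gt0 : (0 < m + u.+1)%N by rewrite addn_gt0 m_gt0.
rewrite -(ler_pM2r (rate_gt0 m_u_gt0)) star_age_balance //.
rewrite natrD mulrDl mulrDr [u.+1%:R * a * _]mulrC lerD2r.
rewrite -[leRHS](star_age_base_balance m_gt0) ler_wpM2r ?mulr_ge0 //.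
exact: le_trans (star_age_le_base u (ltn0Sn m)) (star_age_grow 0 m_gt0).
Qed.

Definition age_factor (D : R) (t : nat) : R :=
  1 + \sum_(d2 < t) \prod_(d1 < d2.+1) ((t - d1)%:R / D).

Lemma age_factorS D t : age_factor D t.+1 = 1 + t.+1%:R / D * age_factor D t.
Proof.
rewrite /age_factor big_ord_recl big_ord1 subn0 mulrDr mulr1 big_distrr /=.
congr (_ + (_ + _)); apply: eq_bigr => j _.
by rewrite /bump /= add1n big_ord_recl subn0.
Qed.

Lemma star_age_closed m t : (0 < m + t)%N ->
  star_age m t = lams / ((m + t)%:R * a) * age_factor (m + t)%:R t.
Proof.
elim: t m => [|t IH] m m_t_gt0.
  by rewrite /age_factor big_ord0 addr0 mulr1 addn0.
rewrite star_ageE /= IH ?addSn ?ltn0Sn // -addnS age_factorS.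
have mt_neq0 : (m%:R + (1 + t%:R) : R) != 0.
  by rewrite gt_eqF // ltr_wpDl ?ler0n // ltr_wpDr ?ler0n ?ltr01.
by field; rewrite mt_neq0 gt_eqF.
Qed.

End StarAge.

Section UniformNetwork.
Variables (R : realFieldType) (n : nat) (lams lam : R) (e : rel 'I_n) (i : 'I_n).
Hypotheses (n_gt0 : (0 < n)%N) (lams_ge0 : 0 <= lams) (lam_gt0 : 0 < lam)
  (e_sym : symmetric e).

Let a : R := lam / n%:R.
Let L0 : 'I_n -> R := @unif_lam0 R n lam.
Let L : 'I_n -> 'I_n -> R := @unif_lam R n lam e.

Lemma a_gt0 : 0 < a.
Proof. by rewrite divr_gt0 ?ltr0n. Qed.

Definition pending (S : {set 'I_n}) : {set 'I_n} := [set j | e i j & j \notin S].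

Lemma pending_add (S : {set 'I_n}) j : j \notin S ->
  #|pending S| = (e i j + #|pending (j |: S)|)%N.
Proof.
move=> jS; rewrite /pending (cardsD1 j) inE jS andbT; congr (_ + _)%N.
by apply: eq_card => k; rewrite !inE; case: (k =P j) => [->|]; rewrite ?andbF.
Qed.

Lemma source_rate (S : {set 'I_n}) : \sum_(j in S) L0 j = #|S|%:R * a.
Proof. by rewrite sumr_const mulr_natl. Qed.

Lemma link_rate_ge0 j k : 0 <= L j k.
Proof. by rewrite /L /unif_lam; case: (e j k) => //; exact: ltW a_gt0. Qed.

Lemma rate_into_ge0 (S : {set 'I_n}) j : 0 <= rate_into L S j.
Proof. by apply: sumr_ge0 => k _; exact: link_rate_ge0. Qed.

Lemma rate_into_hub (S : {set 'I_n}) j : i \in S -> e i j -> a <= rate_into L S j.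
Proof.
move=> iS eij; rewrite /rate_into (bigD1 i) //= {1}/L /unif_lam e_sym eij.
by rewrite lerDl sumr_ge0 // => k _; exact: link_rate_ge0.
Qed.

Lemma sum_pending (S : {set 'I_n}) (c : R) : i \in S ->
  \sum_(j in nbrs L S) (if e i j then c else 0) = c *+ #|pending S|.
Proof.
move=> iS; rewrite -big_mkcondr -sumr_const; apply: eq_bigl => j.
rewrite !inE; case eij: (e i j); rewrite ?andbF //= andbT.
apply/andP/idP => [[]//|jS]; split=> //.
exact: lt_le_trans a_gt0 (rate_into_hub iS eij).
Qed.

Lemma Delta_fuel_le m (S : {set 'I_n}) : i \in S ->
  Delta_fuel lams L0 L m S <= star_age lams a #|S| #|pending S|.
Proof.
elim: m S => [|m IH] S iS /=; first by apply: star_age_ge0 => //; exact: a_gt0.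
have S_gt0 : (0 < #|S|)%N by apply/card_gt0P; exists i.
set F := star_age lams a #|S| #|pending S|.
set g := star_age lams a #|S|.+1 #|pending S|.-1.
have term_le j : j \in nbrs L S ->
    rate_into L S j * Delta_fuel lams L0 L m (j |: S)
    <= rate_into L S j * F + (if e i j then a * (g - F) else 0).
  rewrite inE => /andP[jS _].
  have := IH _ (setU1r j iS); rewrite cardsU1 jS add1n.
  have rate_ge0 := rate_into_ge0 S j.
  have := pending_add jS; case eij: (e i j) => /= pend_eq age_le.
    rewrite add1n in pend_eq.
    apply: weighted_le => //; rewrite /g /F ?pend_eq //.
      by rewrite (ltW a_gt0) (rate_into_hub iS eij).
    by apply: star_age_absorb => //; exact: a_gt0.
  rewrite addr0 ler_wpM2l // (le_trans age_le) // /F pend_eq.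
  by apply: star_age_grow => //; exact: a_gt0.
have sum_le : \sum_(j in nbrs L S) rate_into L S j * Delta_fuel lams L0 L m (j |: S)
    <= F * \sum_(j in nbrs L S) rate_into L S j + a * (g - F) *+ #|pending S|.
  apply: le_trans (ler_sum _ term_le) _.
  by rewrite big_split /= sum_pending // -mulr_suml mulrC.
have balance : F * ((#|S| + #|pending S|)%:R * a) = lams + #|pending S|%:R * a * g.
  by apply: star_age_balance => //; exact: a_gt0.
have rates_ge0 : 0 <= \sum_(j in nbrs L S) rate_into L S j.
  by apply: sumr_ge0 => j _; exact: rate_into_ge0.
rewrite source_rate ler_pdivrMr; last first.
  by rewrite ltr_wpDr // mulr_gt0 ?ltr0n ?a_gt0.
move: balance sum_le; rewrite natrD -[_ *+ #|pending S|]mulr_natl; lra.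
Qed.

Definition in_star (S : {set 'I_n}) : bool := S \subset i |: [set k | e i k].

Lemma in_star_add (S : {set 'I_n}) j : in_star S -> e i j -> in_star (j |: S).
Proof. by move=> S_star eij; rewrite /in_star subUset sub1set !inE eij orbT. Qed.

Section Star.
Hypothesis leaves : forall j, e i j -> degree e j = 1%N.

Lemma leaf_link k j : e i k -> e k j -> j = i.
Proof.
move=> eik ekj; have := leaves eik; rewrite /degree => /eqP/cards1P[x kx].
have : i \in [set l | e k l] by rewrite inE e_sym.
have : j \in [set l | e k l] by rewrite inE.
by rewrite kx !inE => /eqP-> /eqP->.
Qed.

Lemma rate_into_star (S : {set 'I_n}) j : i \in S -> in_star S -> j \notin S ->
  rate_into L S j = if e i j then a else 0.
Proof.
move=> iS S_star jS; rewrite /rate_into (bigD1 i) //= big1 ?addr0.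
  by rewrite /L /unif_lam e_sym.
move=> k /andP[kS k_neq_i]; rewrite /L /unif_lam.
case ejk: (e j k) => //; move: (subsetP S_star k kS).
rewrite !inE (negbTE k_neq_i) /= => eik.
have ekj : e k j by rewrite e_sym.
by move: jS; rewrite (leaf_link eik ekj) iS.
Qed.

Lemma nbrs_star (S : {set 'I_n}) : i \in S -> in_star S -> nbrs L S = pending S.
Proof.
move=> iS S_star; apply/setP => j; rewrite !inE andbC.
have [jS|jS] := boolP (j \in S); rewrite ?andbF // !andbT.
by rewrite (rate_into_star iS S_star jS); case: (e i j); rewrite ?a_gt0 ?ltxx.
Qed.

Lemma Delta_fuel_star m (S : {set 'I_n}) : i \in S -> in_star S ->
  (#|pending S| < m)%N -> Delta_fuel lams L0 L m S = star_age lams a #|S| #|pending S|.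
Proof.
elim: m S => [|m IH] S iS S_star //= pending_lt.
set g := star_age lams a #|S|.+1 #|pending S|.-1.
have nbr_term j : j \in pending S ->
    rate_into L S j * Delta_fuel lams L0 L m (j |: S) = a * g.
  rewrite inE => /andP[eij jS]; have := pending_add jS; rewrite eij add1n => pend.
  rewrite (rate_into_star iS S_star jS) eij IH ?setU1r ?in_star_add //.
    by rewrite cardsU1 jS /g pend.
  by move: pending_lt; rewrite pend.
have nbr_rate j : j \in pending S -> rate_into L S j = a.
  by rewrite inE => /andP[eij jS]; rewrite (rate_into_star iS S_star jS) eij.
rewrite nbrs_star // source_rate (eq_bigr _ nbr_term) (eq_bigr _ nbr_rate).
rewrite !sumr_const star_ageE -[a * g *+ _]mulr_natl -[a *+ _]mulr_natl.
by rewrite natrD (mulrDl _ _ a) mulrA -/g.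
Qed.

End Star.

End UniformNetwork.

Theorem mainTheorem9 (R : realFieldType) (n : nat) (lams lam : R)
    (e : rel 'I_n) (i : 'I_n) (d : nat) :
  (2 <= n)%N -> 0 < lams -> 0 < lam ->
  symmetric e -> irreflexive e ->
  (1 <= d <= n.-1)%N -> degree e i = d ->
  let bound := lams / lam * (n%:R / (d.+1)%:R) *
      (1 + \sum_(d2 < d) \prod_(d1 < d2.+1) ((d - d1)%:R / (d.+1)%:R)) in
  Delta_node lams (@unif_lam0 R n lam) (@unif_lam R n lam e) i <= bound /\
  ((forall j, e i j -> degree e j = 1%N) ->
   Delta_node lams (@unif_lam0 R n lam) (@unif_lam R n lam e) i = bound).
Proof.
move=> n_ge2 lams_gt0 lam_gt0 e_sym e_irr /andP[_ d_le] deg_i bound.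
have n_gt0 : (0 < n)%N by apply: leq_trans n_ge2.
have lams_ge0 := ltW lams_gt0.
have pending_i : #|pending e i [set i]| = d.
  rewrite -deg_i; apply: eq_card => j; rewrite !inE; apply/andb_idr => eij.
  by apply: contraTneq eij => ->; rewrite e_irr.
have age_i : star_age lams (lam / n%:R) #|[set i]| d = bound.
  rewrite cards1 star_age_closed // ?a_gt0 // add1n /bound /age_factor.
  have d1_neq0 : (1 + d%:R : R) != 0 by rewrite addrC natr1 pnatr_eq0.
  have n_neq0 : (n%:R : R) != 0 by rewrite pnatr_eq0 -lt0n.
  by congr (_ * _); field; rewrite d1_neq0 n_neq0 gt_eqF.
rewrite /Delta_node /DeltaS -age_i -pending_i; split.
  by apply: Delta_fuel_le => //; exact: set11.
move=> leaves; apply: Delta_fuel_star => //; first exact: set11.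
  by rewrite /in_star subsetUl.
by rewrite pending_i cards1 subn1 ltnS.
Qed.
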